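(* Let $\alpha\in(0,1)$, $f=f_{M_1}$, and let $(x_n)$ and $M_0(n)=\frac1n\sum_{j=1}^nM_1(x_j)$ be as in the context. Set $c=e^{\alpha c_1}$ and $w_k=\lfloor c^k\rfloor$. Then there exists $\zeta\in\mathbb R$ such that $$\lim_{k\to\infty}\frac{w_{k+1}}{w_k}=c\qquad\text{and}\qquad\lim_{k\to\infty}M_0(w_k)=\zeta.$$
   Context: $f_{M_1}(x)=x(1+M_1(x)x^\alpha)$ on $[0,1/2]$, $2x-1$ on $(1/2,1]$, with $M_1(x)=C_0\,2^{-\{c_1^{-1}\log x\}}$ ($\{\cdot\}$ fractional part, $\{x\}=\{-x\}$ for $x<0$), $c_1>0$, $C_0$ chosen so $f_{M_1}((1/2)^-)=1$. Discontinuities $s_\ell=e^{-\ell c_1}$ with one-sided limits $f(s_\ell^\pm)$. Sequence: $x_0=1/2$; if $x_n\in[f(s_\ell^-),f(s_\ell^+)]$ for some $\ell$, $x_{n+1}=s_\ell$; otherwise $x_{n+1}\in(0,x_n)$ is the point with $f(x_{n+1})=x_n$. *)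

From Stdlib Require Import Reals Lra Lia ZArith.
Open Scope R_scope.

(* Fractional part with the paper's convention: {y} = y - floor y for y >= 0,
   and {y} = {-y} for y < 0. *)
Definition pfrac (y : R) : R :=
  if Rlt_dec y 0 then frac_part (- y) else frac_part y.

Definition M1 (C0 c1 x : R) : R := C0 * Rpower 2 (- pfrac (ln x / c1)).

Definition fM (alpha C0 c1 x : R) : R :=
  if Rle_dec x (1/2) then x * (1 + M1 C0 c1 x * Rpower x alpha)
  else 2 * x - 1.

Definition sdisc (c1 : R) (l : nat) : R := exp (- INR l * c1).

Definition left_lim (g : R -> R) (a L : R) : Prop :=
  limit1_in g (fun x => x < a) L a.
Definition right_lim (g : R -> R) (a L : R) : Prop :=
  limit1_in g (fun x => a < x) L a.

Definition in_gap (alpha C0 c1 : R) (l : nat) (y : R) : Prop :=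
  sdisc c1 l < 1/2 /\
  exists Lm Lp : R,
    left_lim (fM alpha C0 c1) (sdisc c1 l) Lm /\
    right_lim (fM alpha C0 c1) (sdisc c1 l) Lp /\
    Rmin Lm Lp <= y <= Rmax Lm Lp.

Definition is_orbit_seq (alpha C0 c1 : R) (x : nat -> R) : Prop :=
  x 0%nat = 1/2 /\
  forall n : nat,
    (exists l : nat, in_gap alpha C0 c1 l (x n) /\ x (S n) = sdisc c1 l)
    \/
    ((forall l : nat, ~ in_gap alpha C0 c1 l (x n)) /\
     0 < x (S n) < x n /\ fM alpha C0 c1 (x (S n)) = x n).

Definition M0 (C0 c1 : R) (x : nat -> R) (n : nat) : R :=
  / INR n * sum_f_R0 (fun j => M1 C0 c1 (x (S j))) (Nat.pred n).

Definition wk (c : R) (k : nat) : nat := Z.to_nat (Int_part (c ^ k)).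

(* Write x_n = exp (- c1 t_n) and lam = alpha c1.  On a step x_n = f (x_(n+1)) that does not
   cross an integer value of t, t grows by about C0 2^(- frac t) exp (- lam t) / c1, so the
   continuous potential psi with psi' proportional to exp (lam t) 2^(frac t) grows by an
   asymptotically constant amount; integer crossings are too rare to matter, and a Cesaro argument
   gives psi (t_n) ~ kappa n.  In the same way sum_(j <= n) M1 (x_j) ~ exp (lam t_n) / alpha.
   Along n = w_k ~ exp (lam k) this makes psi (t_n) / exp (lam k) converge; as psi (t + 1) =
   exp lam * psi t and psi dominates the increments of exp (lam t), exp (lam t_(w_k)) / exp (lam k)
   converges too, and with it M0 (w_k).  The ratio statement only says that w_k ~ c ^ k. *)

From Stdlib Require Import Reals Lra Lia ZArith.
Open Scope R_scope.

Lemma Rdiv_nonneg u v : 0 <= u -> 0 < v -> 0 <= u / v.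
Proof. intros; unfold Rdiv; apply Rmult_le_pos; [| left; apply Rinv_0_lt_compat]; lra. Qed.

Lemma exp_le_mono u v : u <= v -> exp u <= exp v.
Proof. intros [Huv | <-]; [left; exact (exp_increasing _ _ Huv) | right; reflexivity]. Qed.

Lemma ln_le_mono u v : 0 < u -> u <= v -> ln u <= ln v.
Proof. intros Hu [Huv | <-]; [left; apply ln_increasing | right]; auto. Qed.

Lemma one_minus_exp_opp_le u : 1 - exp (- u) <= u.
Proof. pose proof (exp_ineq1_le (- u)); lra. Qed.

Lemma one_minus_exp_opp_ge u : 0 <= u -> u / (1 + u) <= 1 - exp (- u).
Proof.
  intros Hu. pose proof (exp_ineq1_le u). rewrite exp_Ropp.
  assert (/ exp u <= / (1 + u)) by (apply Rinv_le_contravar; lra).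
  replace (u / (1 + u)) with (1 - / (1 + u)) by (field; lra). lra.
Qed.

Lemma ln_1p_le e : 0 <= e -> ln (1 + e) <= e.
Proof.
  intros He. rewrite <- (ln_exp e) at 2.
  apply ln_le_mono; [lra | apply exp_ineq1_le].
Qed.

Lemma ln_1p_ge e : 0 <= e -> e <= (1 + e) * ln (1 + e).
Proof.
  intros He. pose proof (one_minus_exp_opp_le (ln (1 + e))) as H.
  rewrite exp_Ropp, exp_ln in H by lra.
  replace e with ((1 + e) * (1 - / (1 + e))) at 1 by (field; lra).
  apply Rmult_le_compat_l; lra.
Qed.

Definition decr_quot (q e : R) : R := (1 - exp (- (q * ln (1 + e)))) / e.

Lemma decr_quot_approx q e : 0 < q -> 0 < e ->
  Rabs (decr_quot q e - q) <= q * (1 + q) * e.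
Proof.
  intros Hq He. unfold decr_quot. set (u := q * ln (1 + e)).
  assert (Hu_le : u <= q * e) by (apply Rmult_le_compat_l; [lra | apply ln_1p_le; lra]).
  assert (Hu_ge : q * e <= (1 + e) * u).
  { pose proof (ln_1p_ge e (Rlt_le _ _ He)). unfold u. nra. }
  assert (Hu0 : 0 <= u) by nra.
  pose proof (one_minus_exp_opp_le u) as Hup.
  pose proof (one_minus_exp_opp_ge u Hu0) as Hlow.
  set (r := 1 - exp (- u)) in *. set (D := 1 + e + q * e).
  assert (HD : 1 <= D) by (unfold D; nra).
  assert (Hr : q * e / D <= r).
  { apply Rle_trans with (u / (1 + u)); auto.
    assert (u / (1 + u) - q * e / D = ((1 + e) * u - q * e) / ((1 + u) * D))
      by (unfold D; field; nra).
    assert (0 <= ((1 + e) * u - q * e) / ((1 + u) * D)) by (apply Rdiv_nonneg; nra).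
    lra. }
  apply Rabs_le. split.
  - (* [q / D >= q (2 - D)] because [(D - 1)^2 >= 0] *)
    assert (q / D - q * (2 - D) = q * ((D - 1) * (D - 1)) / D) by (field; lra).
    assert (0 <= q * ((D - 1) * (D - 1)) / D).
    { apply Rdiv_nonneg; [apply Rmult_le_pos; [lra | apply Rle_0_sqr] | lra]. }
    assert (q / D <= r / e).
    { replace (q / D) with (q * e / D / e) by (field; lra).
      unfold Rdiv. apply Rmult_le_compat_r; [left; apply Rinv_0_lt_compat |]; lra. }
    assert (q * (2 - D) = q - q * (1 + q) * e) by (unfold D; ring).
    lra.
  - apply Rle_trans with 0; [| nra].
    assert (r / e <= q).
    { apply (Rmult_le_reg_r e); [lra |]. unfold Rdiv. rewrite Rmult_assoc, Rinv_l; lra. }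
    lra.
Qed.

Lemma Int_part_le t1 t2 : t1 <= t2 -> (Int_part t1 <= Int_part t2)%Z.
Proof.
  intros Ht. destruct (Z.le_gt_cases (Int_part t1) (Int_part t2)) as [|Hgt]; auto.
  pose proof (base_Int_part t1). pose proof (base_Int_part t2).
  assert (IZR (Int_part t2 + 1) <= IZR (Int_part t1)) by (apply IZR_le; lia).
  rewrite plus_IZR in *. lra.
Qed.

Lemma Int_part_IZR z : Int_part (IZR z) = z.
Proof. symmetry. apply Int_part_spec. lra. Qed.

Lemma Int_part_plus_IZR t z : Int_part (t + IZR z) = (Int_part t + z)%Z.
Proof.
  symmetry. apply Int_part_spec. rewrite plus_IZR.
  pose proof (base_Int_part t). lra.
Qed.

Lemma frac_part_plus_IZR t z : frac_part (t + IZR z) = frac_part t.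
Proof. unfold frac_part. rewrite Int_part_plus_IZR, plus_IZR. ring. Qed.

Fixpoint psum (f : nat -> R) (n : nat) : R :=
  match n with O => 0 | S k => psum f k + f k end.

Lemma sum_f_R0_pred_psum f n : (1 <= n)%nat -> sum_f_R0 f (Nat.pred n) = psum f n.
Proof.
  destruct n as [| n]; [lia |]. intros _. simpl Nat.pred.
  induction n as [| n IH]; simpl in *; [ring | rewrite IH; ring].
Qed.

Lemma psum_telescope u n : psum (fun j => u (S j) - u j) n = u n - u O.
Proof. induction n as [| n IH]; simpl; [ring | rewrite IH; ring]. Qed.

Lemma psum_ext f g n : (forall j, f j = g j) -> psum f n = psum g n.
Proof. intros H. induction n as [| n IH]; simpl; [reflexivity | rewrite IH, H; reflexivity]. Qed.

Lemma psum_le f g n : (forall j, f j <= g j) -> psum f n <= psum g n.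
Proof. intros H. induction n as [| n IH]; simpl; [lra | pose proof (H n); lra]. Qed.

Lemma Rabs_psum_le f n : Rabs (psum f n) <= psum (fun j => Rabs (f j)) n.
Proof.
  induction n as [| n IH]; simpl; [rewrite Rabs_R0; lra |].
  pose proof (Rabs_triang (psum f n) (f n)). lra.
Qed.

Lemma psum_lin f g k1 k2 n :
  psum (fun j => k1 * f j + k2 * g j) n = k1 * psum f n + k2 * psum g n.
Proof. induction n as [| n IH]; simpl; [ring | rewrite IH; ring]. Qed.

Lemma psum_scal k f n : psum (fun j => k * f j) n = k * psum f n.
Proof. induction n as [| n IH]; simpl; [ring | rewrite IH; ring]. Qed.

Lemma psum_minus_const f L n : psum (fun j => f j - L) n = psum f n - INR n * L.
Proof. induction n as [| n IH]; cbn [psum]; [simpl; ring | rewrite IH, S_INR; ring]. Qed.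

Lemma Un_cv_const k : Un_cv (fun _ => k) k.
Proof. intros eps Heps. exists O. intros n _. unfold Rdist. rewrite Rminus_diag, Rabs_R0. lra. Qed.

Lemma Un_cv_scal u l k : Un_cv u l -> Un_cv (fun n => k * u n) (k * l).
Proof. intros Hu. exact (CV_mult _ _ _ _ (Un_cv_const k) Hu). Qed.

Lemma Un_cv_div u v l1 l2 : Un_cv u l1 -> Un_cv v l2 -> l2 <> 0 ->
  Un_cv (fun n => u n / v n) (l1 / l2).
Proof.
  intros Hu Hv Hl2. apply (CV_mult _ _ _ _ Hu).
  apply (continuity_seq (fun y => / y)); [| exact Hv].
  apply (continuity_pt_inv id); [apply derivable_continuous_pt, derivable_pt_id | exact Hl2].
Qed.

Lemma Un_cv_dominated u v l N : (forall n, (N <= n)%nat -> Rabs (u n - l) <= v n) ->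
  Un_cv v 0 -> Un_cv u l.
Proof.
  intros Huv Hv eps Heps. destruct (Hv eps Heps) as [M HM]. exists (N + M)%nat.
  intros n Hn. specialize (HM n ltac:(lia)). unfold Rdist in *.
  rewrite Rminus_0_r in HM. pose proof (Huv n ltac:(lia)). pose proof (Rle_abs (v n)). lra.
Qed.

Lemma cv_infty_le u v : (forall n, u n <= v n) -> cv_infty u -> cv_infty v.
Proof.
  intros Huv Hu M. destruct (Hu M) as [N HN]. exists N. intros n Hn.
  specialize (HN n Hn). specialize (Huv n). lra.
Qed.

Lemma cv_infty_INR_scal a : 0 < a -> cv_infty (fun n => a * INR n).
Proof.
  intros Ha M. destruct (archimed (M / a)) as [Hup _].
  exists (Z.to_nat (up (M / a))). intros n Hn.
  assert (IZR (up (M / a)) <= INR n).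
  { apply Rle_trans with (INR (Z.to_nat (up (M / a)))); [| apply le_INR; exact Hn].
    rewrite INR_IZR_INZ. apply IZR_le. lia. }
  replace M with (a * (M / a)) by (field; lra). apply Rmult_lt_compat_l; lra.
Qed.

Lemma Un_cv_div_INR K : Un_cv (fun n => K / INR n) 0.
Proof.
  rewrite <- (Rmult_0_r K). apply Un_cv_scal.
  apply (Un_cv_ext (fun n => / (1 * INR n))); [intros; rewrite Rmult_1_l; reflexivity |].
  apply cv_infty_cv_0, cv_infty_INR_scal. lra.
Qed.

Lemma Un_cv_subseq u (w : nat -> nat) l : Un_cv u l -> cv_infty (fun k => INR (w k)) ->
  Un_cv (fun k => u (w k)) l.
Proof.
  intros Hu Hw eps Heps. destruct (Hu eps Heps) as [N HN]. destruct (Hw (INR N)) as [K HK].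
  exists K. intros k Hk. apply HN. specialize (HK k Hk). apply INR_lt in HK. lia.
Qed.

Lemma cesaro_psum u l : Un_cv u l -> Un_cv (fun n => psum u n / INR n) l.
Proof.
  intros Hu. apply (Un_cv_ext (fun n => sum_f_R0 u (Nat.pred n) / INR n)); [| exact (Cesaro_1 u l Hu)].
  intros [| n]; [simpl; unfold Rdiv; rewrite Rinv_0; ring |].
  rewrite sum_f_R0_pred_psum by lia. reflexivity.
Qed.

(* [u] is close to [L] except at the indices counted by [ind], whose number is controlled
   by the partial sums of [E]. *)
Lemma cesaro_dominated (u E ind : nat -> R) L A B A' C :
  0 <= A -> 0 <= B -> Un_cv E 0 ->
  (forall j, Rabs (u j - L) <= A * E j + B * ind j) ->
  (forall n, psum ind n <= A' * psum E n + C) ->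
  Un_cv (fun n => psum u n / INR n) L.
Proof.
  intros HA HB HE Hu Hind.
  apply (Un_cv_dominated _ (fun n => (A + B * A') * (psum E n / INR n) + B * C / INR n) _ 1).
  - intros n Hn. assert (Hn0 : 0 < INR n) by (apply lt_0_INR; lia).
    replace (psum u n / INR n - L) with (psum (fun j => u j - L) n / INR n)
      by (rewrite psum_minus_const; field; lra).
    unfold Rdiv.
    rewrite Rabs_mult, (Rabs_right (/ INR n)) by (apply Rle_ge, Rlt_le, Rinv_0_lt_compat; lra).
    replace ((A + B * A') * (psum E n * / INR n) + B * C * / INR n)
      with ((A * psum E n + B * (A' * psum E n + C)) * / INR n) by ring.
    apply Rmult_le_compat_r; [apply Rlt_le, Rinv_0_lt_compat; lra |].
    eapply Rle_trans; [apply Rabs_psum_le |].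
    eapply Rle_trans; [apply (psum_le _ (fun j => A * E j + B * ind j)); exact Hu |].
    rewrite psum_lin. apply Rplus_le_compat_l, Rmult_le_compat_l; auto.
  - replace 0 with ((A + B * A') * 0 + 0) by ring.
    apply CV_plus; [apply Un_cv_scal, cesaro_psum, HE | apply Un_cv_div_INR].
Qed.

Lemma limit1_in_le f g D lf lg x0 : adhDa D x0 -> (forall z, D z -> f z <= g z) ->
  limit1_in f D lf x0 -> limit1_in g D lg x0 -> lf <= lg.
Proof.
  intros HD Hfg Hf Hg. destruct (Rle_dec lf lg) as [| Hlt]; [assumption | exfalso].
  destruct (limit_minus _ _ _ _ _ _ Hf Hg (lf - lg) ltac:(lra)) as [al [Hal H]].
  destruct (HD al Hal) as [z [Hz Hdist]].
  specialize (H z (conj Hz Hdist)). simpl in H. unfold Rdist in H.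
  apply Rabs_def2 in H. pose proof (Hfg z Hz). lra.
Qed.

Lemma limit1_in_continuity g D s : continuity_pt g s -> limit1_in g D (g s) s.
Proof.
  intros Hg eps Heps. destruct (Hg eps Heps) as [al [Hal H]]. exists al. split; [exact Hal |].
  intros z [_ Hz]. destruct (Req_dec z s) as [-> | Hne].
  - simpl. unfold Rdist. rewrite Rminus_diag, Rabs_R0. exact Heps.
  - apply H. split; [split; [exact I | auto] | exact Hz].
Qed.

Lemma adhDa_interval_l a b : a < b -> adhDa (fun z => a < z < b) a.
Proof.
  intros Hab al Hal. pose proof (Rmin_l al (b - a)). pose proof (Rmin_r al (b - a)).
  assert (0 < Rmin al (b - a)) by (apply Rmin_pos; lra).
  exists (a + Rmin al (b - a) / 2). split; [lra |].
  unfold Rdist. rewrite Rabs_right; lra.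
Qed.

Lemma adhDa_interval_r a b : a < b -> adhDa (fun z => a < z < b) b.
Proof.
  intros Hab al Hal. pose proof (Rmin_l al (b - a)). pose proof (Rmin_r al (b - a)).
  assert (0 < Rmin al (b - a)) by (apply Rmin_pos; lra).
  exists (b - Rmin al (b - a) / 2). split; [lra |].
  unfold Rdist. rewrite Rabs_left; lra.
Qed.

Section Potential.

Variable a : R.
Hypothesis Ha : 0 < a.

Definition psi_rate : R := ln 2 + a.

Definition psi_block (l : Z) (p : R) : R :=
  exp (a * IZR l) * (exp (psi_rate * p) + exp a / (exp a - 1)).

(* [psi] is the continuous primitive of [psi_rate * exp (a * t) * 2 ^ frac_part t]:
   the additive constant [exp a / (exp a - 1)] glues the blocks (psi_block_1). *)
Definition psi (t : R) : R := psi_block (Int_part t) (frac_part t).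

Lemma psi_rate_pos : 0 < psi_rate.
Proof. pose proof ln_lt_2. unfold psi_rate. lra. Qed.

Lemma psi_block_1 l : psi_block l 1 = psi_block (l + 1) 0.
Proof.
  unfold psi_block, psi_rate. rewrite plus_IZR, Rmult_0_r, Rmult_1_r, exp_0.
  replace (a * (IZR l + 1)) with (a * IZR l + a) by ring.
  rewrite !exp_plus, exp_ln by lra.
  pose proof (exp_ineq1_le a). field. lra.
Qed.

Lemma psi_block_incr l p1 p2 : 0 <= p1 <= p2 -> p2 <= 1 ->
  exp (a * (IZR l + p2)) - exp (a * (IZR l + p1)) <= psi_block l p2 - psi_block l p1 <=
  2 * psi_rate * exp (a * (IZR l + p2)) * (p2 - p1).
Proof.
  intros Hp Hp2. pose proof psi_rate_pos. pose proof ln_lt_2.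
  assert (Hsplit : forall k p, exp (k * p1) = exp (k * p) * exp (- (k * (p - p1))))
    by (intros; rewrite <- exp_plus; f_equal; ring).
  set (X := exp (a * IZR l)). set (E2 := exp (a * p2)). set (F2 := exp (psi_rate * p2)).
  set (dA := exp (- (a * (p2 - p1)))). set (dR := exp (- (psi_rate * (p2 - p1)))).
  assert (HX : forall p, exp (a * (IZR l + p)) = X * exp (a * p))
    by (intros; unfold X; rewrite <- exp_plus; f_equal; ring).
  replace (psi_block l p2 - psi_block l p1) with (X * (F2 - F2 * dR))
    by (unfold psi_block, X, F2, dR; rewrite (Hsplit psi_rate p2); ring).
  rewrite !HX, (Hsplit a p2). fold E2 dA.
  assert (0 < X) by apply exp_pos. assert (0 < E2) by apply exp_pos.
  (* [F2 = 2 ^ p2 * E2] *)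
  assert (HEF : E2 <= F2) by (apply exp_le_mono; unfold psi_rate; nra).
  assert (HFE : F2 <= 2 * E2).
  { unfold F2, E2, psi_rate. rewrite Rmult_plus_distr_r, exp_plus.
    apply Rmult_le_compat_r; [left; apply exp_pos |]. rewrite <- (exp_ln 2) at 2 by lra.
    apply exp_le_mono. nra. }
  assert (HdAR : dR <= dA) by (apply exp_le_mono; unfold psi_rate; nra).
  assert (HdA1 : dA <= 1) by (rewrite <- exp_0; apply exp_le_mono; nra).
  assert (HdR : 1 - dR <= psi_rate * (p2 - p1)) by apply one_minus_exp_opp_le.
  split.
  - replace (X * E2 - X * (E2 * dA)) with (X * (E2 * (1 - dA))) by ring.
    apply Rmult_le_compat_l; [lra |].
    replace (F2 - F2 * dR) with (F2 * (1 - dR)) by ring. apply Rmult_le_compat; lra.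
  - replace (2 * psi_rate * (X * E2) * (p2 - p1)) with (X * (2 * E2 * (psi_rate * (p2 - p1)))) by ring.
    apply Rmult_le_compat_l; [lra |].
    apply Rle_trans with (2 * E2 * (1 - dR)); [nra | apply Rmult_le_compat_l; lra].
Qed.

Lemma psi_incr_crossings n : forall t1 t2, t1 <= t2 ->
  (Int_part t2 - Int_part t1)%Z = Z.of_nat n ->
  exp (a * t2) - exp (a * t1) <= psi t2 - psi t1 <= 2 * psi_rate * exp (a * t2) * (t2 - t1).
Proof.
  induction n as [| n IH]; intros t1 t2 Ht Hn;
    set (l := Int_part t1); pose proof (base_Int_part t1) as Hb1;
    pose proof (base_Int_part t2) as Hb2; fold l in Hb1.
  - assert (Hl : Int_part t2 = l) by (unfold l; lia).
    rewrite Hl in Hb2.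
    pose proof (psi_block_incr l (t1 - IZR l) (t2 - IZR l) ltac:(lra) ltac:(lra)) as Hblock.
    unfold psi, frac_part. rewrite Hl. fold l.
    replace (IZR l + (t2 - IZR l)) with t2 in Hblock by ring.
    replace (IZR l + (t1 - IZR l)) with t1 in Hblock by ring.
    replace (t2 - IZR l - (t1 - IZR l)) with (t2 - t1) in Hblock by ring.
    exact Hblock.
  - set (tm := IZR (l + 1)).
    assert (Htm : t1 < tm <= t2).
    { unfold tm. split; [rewrite plus_IZR; lra |].
      apply Rle_trans with (IZR (Int_part t2)); [apply IZR_le; unfold l; lia | lra]. }
    destruct (IH tm t2 ltac:(lra)) as [IH1 IH2].
    { unfold tm. rewrite Int_part_IZR. unfold l. lia. }
    assert (Hpsi_tm : psi tm = psi_block l 1).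
    { unfold psi, frac_part, tm. rewrite Int_part_IZR, psi_block_1. f_equal. ring. }
    pose proof (psi_block_incr l (t1 - IZR l) 1 ltac:(lra) ltac:(lra)) as [Hb_lo Hb_hi].
    rewrite <- Hpsi_tm in Hb_lo, Hb_hi.
    replace (IZR l + 1) with tm in Hb_lo, Hb_hi by (unfold tm; rewrite plus_IZR; ring).
    replace (IZR l + (t1 - IZR l)) with t1 in Hb_lo by ring.
    replace (1 - (t1 - IZR l)) with (tm - t1) in Hb_hi by (unfold tm; rewrite plus_IZR; ring).
    change (psi_block l (t1 - IZR l)) with (psi t1) in Hb_lo, Hb_hi.
    assert (exp (a * tm) <= exp (a * t2)) by (apply exp_le_mono; nra).
    pose proof psi_rate_pos.
    split; [lra |].
    assert (2 * psi_rate * exp (a * tm) * (tm - t1) <= 2 * psi_rate * exp (a * t2) * (tm - t1))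
      by (apply Rmult_le_compat_r; [lra |]; apply Rmult_le_compat_l; lra).
    lra.
Qed.

Lemma psi_incr t1 t2 : t1 <= t2 ->
  exp (a * t2) - exp (a * t1) <= psi t2 - psi t1 <= 2 * psi_rate * exp (a * t2) * (t2 - t1).
Proof.
  intros Ht. apply (psi_incr_crossings (Z.to_nat (Int_part t2 - Int_part t1))); auto.
  pose proof (Int_part_le _ _ Ht). lia.
Qed.

Lemma Rabs_exp_sub_le_psi_sub t1 t2 :
  Rabs (exp (a * t1) - exp (a * t2)) <= Rabs (psi t1 - psi t2).
Proof.
  destruct (Rle_dec t1 t2) as [Ht | Ht].
  - destruct (psi_incr t1 t2 Ht).
    assert (exp (a * t1) <= exp (a * t2)) by (apply exp_le_mono; nra).
    rewrite !Rabs_left1 by lra. lra.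
  - destruct (psi_incr t2 t1 ltac:(lra)).
    assert (exp (a * t2) <= exp (a * t1)) by (apply exp_le_mono; nra).
    rewrite !Rabs_right by lra. lra.
Qed.

Lemma psi_plus_IZR t z : psi (t + IZR z) = exp (a * IZR z) * psi t.
Proof.
  unfold psi, psi_block. rewrite Int_part_plus_IZR, frac_part_plus_IZR, plus_IZR.
  replace (a * (IZR (Int_part t) + IZR z)) with (a * IZR (Int_part t) + a * IZR z) by ring.
  rewrite exp_plus. ring.
Qed.

(* Shifting [T m] by the integer [n - m] multiplies both [exp (a t)] and [psi t] by
   [exp (a (n - m))], so Rabs_exp_sub_le_psi_sub transfers the Cauchy property. *)
Lemma exp_normalized_cv_of_psi (T : nat -> R) q :
  Un_cv (fun k => psi (T k) / exp (a * INR k)) q ->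
  exists rho, Un_cv (fun k => exp (a * T k) / exp (a * INR k)) rho.
Proof.
  intros Hq. set (Q := fun k => psi (T k) / exp (a * INR k)).
  set (r := fun k => exp (a * T k) / exp (a * INR k)).
  assert (Hcomp : forall m n, (m <= n)%nat -> Rabs (r n - r m) <= Rabs (Q n - Q m)).
  { intros m n Hmn. set (d := IZR (Z.of_nat (n - m))).
    assert (Hn : exp (a * INR n) = exp (a * INR m) * exp (a * d)).
    { unfold d. rewrite <- INR_IZR_INZ, <- exp_plus, minus_INR by exact Hmn. f_equal. ring. }
    assert (He : exp (a * (T m + d)) = exp (a * T m) * exp (a * d))
      by (rewrite <- exp_plus; f_equal; ring).
    pose proof (exp_pos (a * INR m)). pose proof (exp_pos (a * d)).
    replace (r n - r m) with ((exp (a * T n) - exp (a * (T m + d))) / exp (a * INR n))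
      by (unfold r; rewrite Hn, He; field; lra).
    replace (Q n - Q m) with ((psi (T n) - psi (T m + d)) / exp (a * INR n))
      by (unfold Q, d; rewrite psi_plus_IZR, Hn; fold d; field; lra).
    unfold Rdiv. rewrite !Rabs_mult.
    apply Rmult_le_compat_r; [apply Rabs_pos | apply Rabs_exp_sub_le_psi_sub]. }
  assert (Hcauchy : Cauchy_crit r).
  { intros eps Heps. destruct (CV_Cauchy Q (exist _ q Hq) eps Heps) as [N HN].
    exists N. intros n m Hn Hm. unfold Rdist in *. destruct (Nat.le_ge_cases m n).
    - eapply Rle_lt_trans; [apply Hcomp | apply HN]; auto.
    - rewrite Rabs_minus_sym.
      eapply Rle_lt_trans; [apply Hcomp | rewrite Rabs_minus_sym; apply HN]; auto. }
  destruct (R_complete r Hcauchy) as [rho Hrho]. exists rho. exact Hrho.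
Qed.

End Potential.

Lemma pow_exp_INR a k : exp a ^ k = exp (a * INR k).
Proof.
  induction k as [| k IH]; [simpl; rewrite Rmult_0_r, exp_0; reflexivity |].
  rewrite <- tech_pow_Rmult, IH, S_INR, <- exp_plus. f_equal. ring.
Qed.

Section FloorExp.

Variable a : R.
Hypothesis Ha : 0 < a.

Lemma wk_exp_bounds k : exp (a * INR k) - 1 < INR (wk (exp a) k) <= exp (a * INR k).
Proof.
  unfold wk. rewrite pow_exp_INR. pose proof (base_Int_part (exp (a * INR k))).
  pose proof (exp_ineq1_le (a * INR k)). pose proof (pos_INR k).
  assert (0 <= Int_part (exp (a * INR k)))%Z by (apply le_IZR; simpl; nra).
  rewrite (INR_IZR_INZ (Z.to_nat _)), Z2Nat.id by assumption. lra.
Qed.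

Lemma wk_exp_pos k : 0 < INR (wk (exp a) k).
Proof.
  pose proof (wk_exp_bounds k). pose proof (exp_ineq1_le (a * INR k)). pose proof (pos_INR k). nra.
Qed.

Lemma exp_INR_cv_infty : cv_infty (fun k => exp (a * INR k)).
Proof.
  apply (cv_infty_le (fun k => a * INR k)); [| exact (cv_infty_INR_scal a Ha)].
  intros k. pose proof (exp_ineq1_le (a * INR k)). lra.
Qed.

Lemma wk_exp_cv_infty : cv_infty (fun k => INR (wk (exp a) k)).
Proof.
  apply (cv_infty_le (fun k => a * INR k)); [| exact (cv_infty_INR_scal a Ha)].
  intros k. pose proof (wk_exp_bounds k). pose proof (exp_ineq1_le (a * INR k)). lra.
Qed.

Lemma wk_div_exp_cv : Un_cv (fun k => INR (wk (exp a) k) / exp (a * INR k)) 1.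
Proof.
  apply (Un_cv_dominated _ (fun k => / exp (a * INR k)) _ O);
    [| exact (cv_infty_cv_0 _ exp_INR_cv_infty)].
  intros k _. pose proof (wk_exp_bounds k). pose proof (exp_pos (a * INR k)).
  replace (INR (wk (exp a) k) / exp (a * INR k) - 1)
    with ((INR (wk (exp a) k) - exp (a * INR k)) * / exp (a * INR k)) by (field; lra).
  rewrite Rabs_mult, (Rabs_right (/ _)) by (apply Rle_ge, Rlt_le, Rinv_0_lt_compat; lra).
  rewrite <- (Rmult_1_l (/ exp (a * INR k))) at 2.
  apply Rmult_le_compat_r; [apply Rlt_le, Rinv_0_lt_compat; lra | apply Rabs_le; lra].
Qed.

Lemma wk_succ_ratio_cv : Un_cv (fun k => INR (wk (exp a) (S k)) / INR (wk (exp a) k)) (exp a).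
Proof.
  set (r := fun k => INR (wk (exp a) k) / exp (a * INR k)).
  assert (Hshift : Un_cv (fun k => r (S k)) 1).
  { apply (Un_cv_ext (fun k => r (k + 1)%nat)); [intros k; rewrite Nat.add_1_r; reflexivity |].
    apply CV_shift', wk_div_exp_cv. }
  pose proof (Un_cv_scal _ _ (exp a) (Un_cv_div _ _ _ _ Hshift wk_div_exp_cv R1_neq_R0)) as Hlim.
  replace (exp a * (1 / 1)) with (exp a) in Hlim by field.
  refine (Un_cv_ext _ _ _ _ Hlim). intros k. unfold r.
  pose proof (wk_exp_pos k). pose proof (exp_pos (a * INR k)). pose proof (exp_pos a).
  rewrite S_INR, Rmult_plus_distr_l, Rmult_1_r, exp_plus. field. repeat split; lra.
Qed.

End FloorExp.

Section Orbit.

Variables alpha c1 C0 : R.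
Variable x : nat -> R.
Hypothesis Halpha : 0 < alpha.
Hypothesis Hc1 : 0 < c1.
Hypothesis HC0 : left_lim (fM alpha C0 c1) (1/2) 1.
Hypothesis Hx : is_orbit_seq alpha C0 c1 x.

Definition fconst (K z : R) : R := z * (1 + K * Rpower z alpha).

Lemma fM_le_half z : z <= 1/2 -> fM alpha C0 c1 z = fconst (M1 C0 c1 z) z.
Proof. intros Hz. unfold fM. destruct (Rle_dec z (1/2)); [reflexivity | lra]. Qed.

Lemma fconst_continuous K s : 0 < s -> continuity_pt (fconst K) s.
Proof.
  intros Hs. unfold fconst.
  apply continuity_pt_mult; [apply derivable_continuous_pt, derivable_pt_id |].
  apply continuity_pt_plus; [apply continuity_pt_const; intros u v; reflexivity |].
  apply continuity_pt_mult; [apply continuity_pt_const; intros u v; reflexivity |].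
  apply derivable_continuous_pt. exists (alpha * Rpower s (alpha - 1)).
  apply derivable_pt_lim_power. exact Hs.
Qed.

Lemma C0_pos : 0 < C0.
Proof.
  destruct (Rlt_le_dec 0 C0) as [| HC]; [assumption | exfalso].
  set (D := fun z => 0 < z < 1/2).
  assert (Hle : forall z, D z -> fM alpha C0 c1 z <= id z).
  { intros z Hz. unfold D, id in *. rewrite fM_le_half by lra. unfold fconst, M1, Rpower.
    pose proof (exp_pos (- pfrac (ln z / c1) * ln 2)). pose proof (exp_pos (alpha * ln z)).
    assert (0 <= - C0 * exp (- pfrac (ln z / c1) * ln 2) * exp (alpha * ln z))
      by (apply Rmult_le_pos; [apply Rmult_le_pos |]; lra).
    nra. }
  assert (Hlim : 1 <= 1/2).
  { apply (limit1_in_le _ _ D 1 (1/2) (1/2) (adhDa_interval_r 0 (1/2) ltac:(lra)) Hle).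
    - apply (limit1_imp _ (fun z => z < 1/2)); [intros z Hz; apply Hz | exact HC0].
    - apply lim_x. }
  lra.
Qed.

Lemma M1_bounds z : C0 / 2 <= M1 C0 c1 z <= C0.
Proof.
  pose proof C0_pos. pose proof ln_lt_2.
  assert (Hp : 0 <= pfrac (ln z / c1) < 1).
  { unfold pfrac. destruct (Rlt_dec (ln z / c1) 0);
      [destruct (base_fp (- (ln z / c1))) | destruct (base_fp (ln z / c1))]; lra. }
  assert (Hlo : / 2 <= Rpower 2 (- pfrac (ln z / c1))).
  { unfold Rpower. replace (/ 2) with (exp (- ln 2)) by (rewrite exp_Ropp, exp_ln; lra).
    apply exp_le_mono. nra. }
  assert (Hhi : Rpower 2 (- pfrac (ln z / c1)) <= 1).
  { unfold Rpower. rewrite <- exp_0. apply exp_le_mono. nra. }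
  unfold M1. split; nra.
Qed.

Lemma fconst_le K1 K2 z : 0 < z -> K1 <= K2 -> fconst K1 z <= fconst K2 z.
Proof.
  intros Hz HK. unfold fconst. apply Rmult_le_compat_l; [lra |].
  apply Rplus_le_compat_l, Rmult_le_compat_r; [left; apply exp_pos | exact HK].
Qed.

Lemma fM_bounds z : 0 < z <= 1/2 -> fconst (C0 / 2) z <= fM alpha C0 c1 z <= fconst C0 z.
Proof. intros Hz. rewrite fM_le_half by lra. pose proof (M1_bounds z). split; apply fconst_le; lra. Qed.

Lemma one_sided_limit_bounds s L : 0 < s < 1/2 ->
  left_lim (fM alpha C0 c1) s L \/ right_lim (fM alpha C0 c1) s L ->
  fconst (C0 / 2) s <= L <= fconst C0 s.
Proof.
  intros Hs HL.
  assert (Hgen : forall D, adhDa D s -> (forall z, D z -> 0 < z <= 1/2) ->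
            limit1_in (fM alpha C0 c1) D L s -> fconst (C0 / 2) s <= L <= fconst C0 s).
  { intros D HD HD12 Hf. split.
    - apply (limit1_in_le (fconst (C0 / 2)) (fM alpha C0 c1) D _ _ s HD);
        [intros z Hz; apply fM_bounds; auto | | exact Hf].
      apply limit1_in_continuity, fconst_continuous. lra.
    - apply (limit1_in_le (fM alpha C0 c1) (fconst C0) D _ _ s HD);
        [intros z Hz; apply fM_bounds; auto | exact Hf |].
      apply limit1_in_continuity, fconst_continuous. lra. }
  destruct HL as [HL | HL].
  - apply (Hgen (fun z => 0 < z < s)); [apply adhDa_interval_r; lra | intros; lra |].
    apply (limit1_imp _ (fun z => z < s)); [intros z Hz; apply Hz | exact HL].
  - apply (Hgen (fun z => s < z < 1/2)); [apply adhDa_interval_l; lra | intros; lra |].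
    apply (limit1_imp _ (fun z => s < z)); [intros z Hz; apply Hz | exact HL].
Qed.

Lemma orbit_step n : 0 < x n <= 1/2 ->
  0 < x (S n) < x n /\ fconst (C0 / 2) (x (S n)) <= x n <= fconst C0 (x (S n)) /\
  (x n = fconst (M1 C0 c1 (x (S n))) (x (S n)) \/ exists l, x (S n) = sdisc c1 l).
Proof.
  intros Hn. pose proof C0_pos. destruct Hx as [_ Hrec].
  destruct (Hrec n) as [[l [[Hl [Lm [Lp [HLm [HLp HLx]]]]] Heq]] | [_ [Hlt Hf]]].
  - assert (Hs : 0 < sdisc c1 l < 1/2) by (split; [apply exp_pos | exact Hl]).
    pose proof (one_sided_limit_bounds _ Lm Hs (or_introl HLm)).
    pose proof (one_sided_limit_bounds _ Lp Hs (or_intror HLp)).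
    pose proof (Rmin_glb Lm Lp (fconst (C0 / 2) (sdisc c1 l)) ltac:(lra) ltac:(lra)).
    pose proof (Rmax_lub Lm Lp (fconst C0 (sdisc c1 l)) ltac:(lra) ltac:(lra)).
    assert (sdisc c1 l < fconst (C0 / 2) (sdisc c1 l)).
    { unfold fconst, Rpower. pose proof (exp_pos (alpha * ln (sdisc c1 l))).
      assert (0 < C0 / 2 * exp (alpha * ln (sdisc c1 l))) by (apply Rmult_lt_0_compat; lra). nra. }
    rewrite Heq. split; [lra | split; [lra | right; exists l; reflexivity]].
  - pose proof (fM_bounds (x (S n)) ltac:(lra)). rewrite Hf in *.
    split; [lra | split; [lra | left]]. rewrite <- Hf. apply fM_le_half. lra.
Qed.

Lemma x_range n : 0 < x n <= 1/2.
Proof.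
  induction n as [| n IH]; [destruct Hx as [-> _]; lra |].
  destruct (orbit_step n IH) as [? _]. lra.
Qed.

(* Logarithmic coordinates: [x n = exp (- c1 * tlog n)]; the discontinuities [sdisc c1 l]
   sit at the integers [tlog = l], and [M1] is [C0 * 2 ^ (- frac_part tlog)]. *)
Definition tlog (n : nat) : R := - (ln (x n) / c1).

Definition lam : R := alpha * c1.

Definition xalpha (n : nat) : R := exp (- (lam * tlog (S n))).

Lemma lam_pos : 0 < lam.
Proof. unfold lam. nra. Qed.

Lemma ln_x_neg n : ln (x n) < 0.
Proof. rewrite <- ln_1. pose proof (x_range n). apply ln_increasing; lra. Qed.

Lemma tlog_pos n : 0 < tlog n.
Proof.
  unfold tlog, Rdiv. pose proof (ln_x_neg n). pose proof (Rinv_0_lt_compat c1 Hc1). nra.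
Qed.

Lemma Rpower_x_alpha n : Rpower (x n) alpha = exp (- (lam * tlog n)).
Proof. unfold Rpower, lam, tlog. f_equal. field. lra. Qed.

Lemma M1_x n : M1 C0 c1 (x n) = C0 * exp (- (frac_part (tlog n) * ln 2)).
Proof.
  unfold M1, pfrac, Rpower. destruct (Rlt_dec (ln (x n) / c1) 0) as [_ | Hge].
  - unfold tlog. f_equal. f_equal. ring.
  - exfalso. apply Hge. pose proof (tlog_pos n). unfold tlog in *. lra.
Qed.

Lemma xalpha_range n : 0 < xalpha n <= 1.
Proof.
  split; [apply exp_pos |]. rewrite <- exp_0. apply exp_le_mono.
  pose proof (tlog_pos (S n)). pose proof lam_pos. nra.
Qed.

Lemma exp_tlog_xalpha n : exp (lam * tlog (S n)) * xalpha n = 1.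
Proof. unfold xalpha. rewrite <- exp_plus, Rplus_opp_r. apply exp_0. Qed.

Lemma fconst_x_succ K n : fconst K (x (S n)) = x (S n) * (1 + K * xalpha n).
Proof. unfold fconst. rewrite Rpower_x_alpha. reflexivity. Qed.

Lemma tlog_step_ln n : c1 * (tlog (S n) - tlog n) = ln (x n) - ln (x (S n)).
Proof. unfold tlog. field. lra. Qed.

Lemma tlog_step_bounds n :
  ln (1 + C0 / 2 * xalpha n) <= c1 * (tlog (S n) - tlog n) <= ln (1 + C0 * xalpha n).
Proof.
  destruct (orbit_step n (x_range n)) as [Hlt [[Hlo Hhi] _]].
  rewrite !fconst_x_succ in *. rewrite tlog_step_ln.
  pose proof C0_pos. pose proof (xalpha_range n).
  split; apply (Rplus_le_reg_r (ln (x (S n)))); ring_simplify;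
    rewrite Rplus_comm, <- ln_mult by nra; apply ln_le_mono; nra.
Qed.

Lemma tlog_lt_succ n : tlog n < tlog (S n).
Proof.
  destruct (tlog_step_bounds n) as [Hlo _]. pose proof C0_pos. pose proof (xalpha_range n).
  assert (0 < ln (1 + C0 / 2 * xalpha n)) by (rewrite <- ln_1; apply ln_increasing; nra).
  nra.
Qed.

Lemma tlog_le m n : (m <= n)%nat -> tlog m <= tlog n.
Proof. induction 1; [lra | pose proof (tlog_lt_succ m0); lra]. Qed.

Lemma tlog_unbounded T : exists n, T < tlog n.
Proof.
  pose proof C0_pos. pose proof lam_pos.
  set (eps := exp (- (lam * T))).
  set (dl := ln (1 + C0 / 2 * eps) / c1).
  assert (Hdl : 0 < dl).
  { apply Rdiv_pos_pos; [| lra]. rewrite <- ln_1. apply ln_increasing; [lra |].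
    pose proof (exp_pos (- (lam * T))). unfold eps. nra. }
  (* below [T] every step increases [tlog] by at least [dl] *)
  assert (Hgrow : forall n, (exists m, T < tlog m) \/ tlog O + INR n * dl <= tlog n).
  { induction n as [| n [IH | IH]]; [right; simpl; lra | left; exact IH |].
    destruct (Rlt_dec T (tlog (S n))) as [HT | HT]; [left; exists (S n); exact HT | right].
    assert (eps <= xalpha n) by (apply exp_le_mono; nra).
    destruct (tlog_step_bounds n) as [Hlo _].
    assert (ln (1 + C0 / 2 * eps) <= ln (1 + C0 / 2 * xalpha n))
      by (apply ln_le_mono; pose proof (exp_pos (- (lam * T))); unfold eps in *; nra).
    assert (dl <= tlog (S n) - tlog n).
    { apply (Rmult_le_reg_l c1); [lra |].
      replace (c1 * dl) with (ln (1 + C0 / 2 * eps)) by (unfold dl; field; lra). lra. }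
    rewrite S_INR. lra. }
  destruct (cv_infty_INR_scal dl Hdl (T - tlog O)) as [N HN].
  destruct (Hgrow N) as [Hex | Hle]; [exact Hex |].
  exists N. specialize (HN N (Nat.le_refl N)). lra.
Qed.

Lemma xalpha_cv0 : Un_cv xalpha 0.
Proof.
  intros eps Heps. pose proof lam_pos.
  destruct (tlog_unbounded (- ln eps / lam)) as [m Hm]. exists m. intros n Hn.
  unfold Rdist. rewrite Rminus_0_r. pose proof (xalpha_range n). rewrite Rabs_right by lra.
  assert (Ht : - ln eps / lam < tlog (S n)) by (pose proof (tlog_le m (S n) ltac:(lia)); lra).
  unfold xalpha. rewrite <- (exp_ln eps) by lra. apply exp_increasing.
  apply (Rmult_lt_compat_l lam) in Ht; [| lra].
  replace (lam * (- ln eps / lam)) with (- ln eps) in Ht by (field; lra). lra.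
Qed.

Definition rel_step (j : nat) : R := M1 C0 c1 (x (S j)) * xalpha j.

Definition ncross (j : nat) : R := IZR (Int_part (tlog (S j))) - IZR (Int_part (tlog j)).

Lemma rel_step_bounds j : 0 < rel_step j <= C0 * xalpha j.
Proof.
  unfold rel_step. pose proof (M1_bounds (x (S j))). pose proof C0_pos. pose proof (xalpha_range j).
  split; nra.
Qed.

Lemma ncross_cases j :
  (Int_part (tlog (S j)) = Int_part (tlog j) /\ ncross j = 0) \/ 1 <= ncross j.
Proof.
  unfold ncross. pose proof (Int_part_le _ _ (Rlt_le _ _ (tlog_lt_succ j))).
  destruct (Z.eq_dec (Int_part (tlog (S j))) (Int_part (tlog j))) as [-> | Hne].
  - left. split; [reflexivity | ring].
  - right. assert (IZR (Int_part (tlog j) + 1) <= IZR (Int_part (tlog (S j)))) by (apply IZR_le; lia).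
    rewrite plus_IZR in *. lra.
Qed.

Lemma psum_ncross_le n : psum ncross n <= C0 / c1 * psum xalpha n + 1.
Proof.
  unfold ncross. rewrite (psum_telescope (fun j => IZR (Int_part (tlog j)))).
  pose proof (base_Int_part (tlog n)). pose proof (base_Int_part (tlog O)).
  assert (tlog n - tlog O <= C0 / c1 * psum xalpha n).
  { rewrite <- psum_telescope, <- psum_scal.
    apply psum_le. intros j. pose proof C0_pos. pose proof (xalpha_range j).
    destruct (tlog_step_bounds j) as [_ Hhi]. pose proof (ln_1p_le (C0 * xalpha j) ltac:(nra)).
    apply (Rmult_le_reg_l c1); [lra |].
    replace (c1 * (C0 / c1 * xalpha j)) with (C0 * xalpha j) by (field; lra). lra. }
  lra.
Qed.

(* Between two integers of [tlog] the step is a genuine inverse branch of [f]. *)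
Lemma tlog_step_regular j : Int_part (tlog (S j)) = Int_part (tlog j) ->
  c1 * (tlog (S j) - tlog j) = ln (1 + rel_step j).
Proof.
  intros Hint. pose proof (rel_step_bounds j).
  destruct (orbit_step j (x_range j)) as [Hlt [_ [Hf | [l Hl]]]].
  - rewrite tlog_step_ln, Hf, fconst_x_succ. fold (rel_step j).
    rewrite ln_mult by lra. ring.
  - exfalso. assert (Ht : tlog (S j) = IZR (Z.of_nat l)).
    { unfold tlog. rewrite Hl. unfold sdisc. rewrite ln_exp, <- INR_IZR_INZ. field. lra. }
    pose proof (tlog_lt_succ j). pose proof (base_Int_part (tlog j)).
    rewrite Ht, Int_part_IZR in Hint. rewrite <- Hint in *. lra.
Qed.

Lemma exp_tlog_step_le j : exp (lam * tlog (S j)) * (tlog (S j) - tlog j) <= C0 / c1.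
Proof.
  destruct (tlog_step_bounds j) as [_ Hhi]. pose proof C0_pos. pose proof (xalpha_range j).
  pose proof (ln_1p_le (C0 * xalpha j) ltac:(nra)). pose proof (exp_tlog_xalpha j).
  pose proof (exp_pos (lam * tlog (S j))).
  apply (Rmult_le_reg_l c1); [lra |].
  replace (c1 * (C0 / c1)) with (exp (lam * tlog (S j)) * (C0 * xalpha j))
    by (transitivity (C0 * (exp (lam * tlog (S j)) * xalpha j));
        [ring | rewrite exp_tlog_xalpha; field; lra]).
  replace (c1 * (exp (lam * tlog (S j)) * (tlog (S j) - tlog j)))
    with (exp (lam * tlog (S j)) * (c1 * (tlog (S j) - tlog j))) by ring.
  apply Rmult_le_compat_l; lra.
Qed.

Lemma bound_by_crossings (u : nat -> R) A B : 0 <= A ->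
  (forall j, Int_part (tlog (S j)) = Int_part (tlog j) -> Rabs (u j) <= A * xalpha j) ->
  (forall j, Rabs (u j) <= B) ->
  forall j, Rabs (u j) <= A * xalpha j + B * ncross j.
Proof.
  intros HA Hreg Hall j. pose proof (xalpha_range j). pose proof (Hall j). pose proof (Rabs_pos (u j)).
  destruct (ncross_cases j) as [[Hint ->] | Hcross].
  - rewrite Rmult_0_r, Rplus_0_r. exact (Hreg j Hint).
  - assert (0 <= A * xalpha j) by nra. nra.
Qed.

Definition psi_step (j : nat) : R := psi lam (tlog (S j)) - psi lam (tlog j).

Definition psi_speed : R := psi_rate lam / c1.

Lemma psi_speed_pos : 0 < psi_speed.
Proof. apply Rdiv_pos_pos; [apply psi_rate_pos, lam_pos | exact Hc1]. Qed.

Lemma psi_step_regular j : Int_part (tlog (S j)) = Int_part (tlog j) ->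
  psi_step j = C0 * decr_quot psi_speed (rel_step j).
Proof.
  intros Hint. pose proof (tlog_step_regular j Hint) as Hstep. pose proof (rel_step_bounds j).
  unfold psi_step, psi, frac_part. rewrite Hint. set (l := Int_part (tlog j)).
  set (t' := tlog (S j)). set (t := tlog j). unfold psi_block.
  set (X := exp (lam * IZR l)). set (Y := exp (psi_rate lam * (t' - IZR l))).
  set (Z := exp (- (psi_speed * ln (1 + rel_step j)))).
  assert (HYZ : exp (psi_rate lam * (t - IZR l)) = Y * Z).
  { unfold Y, Z, psi_speed. rewrite <- exp_plus. f_equal. rewrite <- Hstep. unfold t, t'. field. lra. }
  (* the factor [2 ^ frac_part t'] in [Y] cancels the one in [M1 (x (S j))] *)
  assert (HXY : X * Y * rel_step j = C0).
  { unfold X, Y, rel_step, xalpha. rewrite M1_x. fold t'. unfold frac_part.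
    replace (Int_part t') with l by (unfold t', l; rewrite Hint; reflexivity).
    transitivity (C0 * (exp (lam * IZR l) * exp (psi_rate lam * (t' - IZR l)) *
      exp (- ((t' - IZR l) * ln 2)) * exp (- (lam * t')))); [ring |].
    rewrite <- !exp_plus. unfold psi_rate.
    replace (lam * IZR l + (ln 2 + lam) * (t' - IZR l) + - ((t' - IZR l) * ln 2) + - (lam * t'))
      with 0 by ring.
    rewrite exp_0. ring. }
  rewrite HYZ. unfold decr_quot. fold Z.
  replace (X * (Y + exp lam / (exp lam - 1)) - X * (Y * Z + exp lam / (exp lam - 1)))
    with (X * Y * rel_step j * ((1 - Z) / rel_step j))
    by (pose proof lam_pos; pose proof (exp_ineq1_le lam); field; lra).
  rewrite HXY. reflexivity.
Qed.

Lemma psi_step_regular_bound j : Int_part (tlog (S j)) = Int_part (tlog j) ->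
  Rabs (psi_step j - C0 * psi_speed) <= C0 * psi_speed * (1 + psi_speed) * C0 * xalpha j.
Proof.
  intros Hint. rewrite psi_step_regular by exact Hint.
  pose proof C0_pos. pose proof (rel_step_bounds j). pose proof psi_speed_pos as Hq.
  set (q := psi_speed) in *.
  rewrite <- Rmult_minus_distr_l, Rabs_mult, Rabs_right by lra.
  pose proof (decr_quot_approx q (rel_step j) Hq ltac:(lra)).
  replace (C0 * q * (1 + q) * C0 * xalpha j) with (C0 * (q * (1 + q) * (C0 * xalpha j))) by ring.
  apply Rmult_le_compat_l; [lra |]. eapply Rle_trans; [eassumption |].
  apply Rmult_le_compat_l; [nra | lra].
Qed.

Lemma psi_step_bound j :
  Rabs (psi_step j - C0 * psi_speed) <= 2 * psi_rate lam * C0 / c1 + C0 * psi_speed.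
Proof.
  pose proof C0_pos. pose proof (psi_rate_pos lam lam_pos). pose proof psi_speed_pos.
  destruct (psi_incr lam lam_pos (tlog j) (tlog (S j)) (Rlt_le _ _ (tlog_lt_succ j))) as [Hlo Hhi].
  fold (psi_step j) in Hlo, Hhi.
  assert (exp (lam * tlog j) <= exp (lam * tlog (S j)))
    by (apply exp_le_mono, Rmult_le_compat_l; [apply Rlt_le, lam_pos | apply Rlt_le, tlog_lt_succ]).
  assert (psi_step j <= 2 * psi_rate lam * C0 / c1).
  { replace (2 * psi_rate lam * C0 / c1) with (2 * psi_rate lam * (C0 / c1)) by (field; lra).
    rewrite Rmult_assoc in Hhi. eapply Rle_trans; [exact Hhi |].
    apply Rmult_le_compat_l; [lra | apply exp_tlog_step_le]. }
  assert (0 <= 2 * psi_rate lam * C0 / c1) by (apply Rdiv_nonneg; nra).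
  apply Rabs_le. nra.
Qed.

Definition m1_defect (j : nat) : R :=
  (exp (lam * tlog (S j)) - exp (lam * tlog j)) / alpha - M1 C0 c1 (x (S j)).

Lemma m1_defect_regular j : Int_part (tlog (S j)) = Int_part (tlog j) ->
  m1_defect j = M1 C0 c1 (x (S j)) / alpha * (decr_quot alpha (rel_step j) - alpha).
Proof.
  intros Hint. pose proof (tlog_step_regular j Hint) as Hstep. pose proof (rel_step_bounds j).
  unfold m1_defect. set (t' := tlog (S j)). set (t := tlog j).
  assert (H1 : exp (lam * t) = exp (lam * t') * exp (- (alpha * ln (1 + rel_step j)))).
  { rewrite <- exp_plus. f_equal. rewrite <- Hstep. unfold lam, t, t'. ring. }
  assert (H2 : exp (lam * t') * rel_step j = M1 C0 c1 (x (S j))).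
  { unfold rel_step. transitivity (M1 C0 c1 (x (S j)) * (exp (lam * t') * xalpha j)); [ring |].
    unfold t'. rewrite exp_tlog_xalpha. ring. }
  rewrite H1. unfold decr_quot. rewrite <- H2. field. lra.
Qed.

Lemma m1_defect_regular_bound j : Int_part (tlog (S j)) = Int_part (tlog j) ->
  Rabs (m1_defect j) <= C0 * (1 + alpha) * C0 * xalpha j.
Proof.
  intros Hint. rewrite m1_defect_regular by exact Hint.
  pose proof C0_pos. pose proof (rel_step_bounds j). pose proof (M1_bounds (x (S j))).
  pose proof (decr_quot_approx alpha (rel_step j) Halpha ltac:(lra)).
  rewrite Rabs_mult, (Rabs_right (M1 C0 c1 (x (S j)) / alpha))
    by (apply Rle_ge, Rdiv_nonneg; lra).
  apply Rle_trans with (C0 / alpha * (alpha * (1 + alpha) * (C0 * xalpha j))).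
  - apply Rmult_le_compat; [apply Rdiv_nonneg; lra | apply Rabs_pos | |].
    + unfold Rdiv. apply Rmult_le_compat_r; [apply Rlt_le, Rinv_0_lt_compat |]; lra.
    + eapply Rle_trans; [eassumption |]. apply Rmult_le_compat_l; nra.
  - right. field. lra.
Qed.

Lemma m1_defect_bound j : Rabs (m1_defect j) <= C0.
Proof.
  pose proof C0_pos. pose proof (M1_bounds (x (S j))). pose proof (tlog_lt_succ j).
  pose proof lam_pos. pose proof (exp_tlog_step_le j). pose proof (exp_pos (lam * tlog (S j))).
  set (u := lam * (tlog (S j) - tlog j)).
  assert (Hsplit : exp (lam * tlog (S j)) - exp (lam * tlog j)
                   = exp (lam * tlog (S j)) * (1 - exp (- u))).
  { unfold u.
    replace (lam * tlog j) with (lam * tlog (S j) + - (lam * (tlog (S j) - tlog j))) by ring.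
    rewrite exp_plus. ring. }
  assert (Hu : exp (- u) <= 1) by (rewrite <- exp_0; apply exp_le_mono; unfold u; nra).
  assert (Hle : exp (lam * tlog (S j)) - exp (lam * tlog j) <= alpha * C0).
  { rewrite Hsplit. apply Rle_trans with (exp (lam * tlog (S j)) * u).
    - apply Rmult_le_compat_l; [lra | apply one_minus_exp_opp_le].
    - replace (exp (lam * tlog (S j)) * u)
        with (alpha * c1 * (exp (lam * tlog (S j)) * (tlog (S j) - tlog j))) by (unfold u, lam; ring).
      replace (alpha * C0) with (alpha * c1 * (C0 / c1)) by (field; lra).
      apply Rmult_le_compat_l; [nra | lra]. }
  assert (0 <= (exp (lam * tlog (S j)) - exp (lam * tlog j)) / alpha <= C0).
  { split; [apply Rdiv_nonneg; nra |].
    apply (Rmult_le_reg_l alpha); [lra |].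
    replace (alpha * ((exp (lam * tlog (S j)) - exp (lam * tlog j)) / alpha))
      with (exp (lam * tlog (S j)) - exp (lam * tlog j)) by (field; lra).
    lra. }
  unfold m1_defect. apply Rabs_le. lra.
Qed.

Lemma psi_tlog_avg_cv : Un_cv (fun n => psi lam (tlog n) / INR n) (C0 * psi_speed).
Proof.
  pose proof C0_pos. pose proof psi_speed_pos.
  assert (HA : 0 <= C0 * psi_speed * (1 + psi_speed) * C0)
    by (apply Rmult_le_pos; [apply Rmult_le_pos |]; nra).
  assert (Hsteps : Un_cv (fun n => psum psi_step n / INR n) (C0 * psi_speed)).
  { apply (cesaro_dominated _ xalpha ncross _ (C0 * psi_speed * (1 + psi_speed) * C0)
             (2 * psi_rate lam * C0 / c1 + C0 * psi_speed) (C0 / c1) 1);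
      [exact HA | | apply xalpha_cv0 | | apply psum_ncross_le].
    - pose proof (psi_step_bound O). pose proof (Rabs_pos (psi_step O - C0 * psi_speed)). lra.
    - apply bound_by_crossings; [exact HA | apply psi_step_regular_bound | apply psi_step_bound]. }
  pose proof (CV_plus _ _ _ _ Hsteps (Un_cv_div_INR (psi lam (tlog O)))) as Hsum.
  rewrite Rplus_0_r in Hsum.
  refine (Un_cv_ext _ _ _ _ Hsum). intros n.
  unfold psi_step, Rdiv. rewrite <- Rmult_plus_distr_r.
  rewrite (psum_telescope (fun j => psi lam (tlog j))). f_equal. ring.
Qed.

Lemma M1_avg_sub_exp_cv :
  Un_cv (fun n => psum (fun j => M1 C0 c1 (x (S j))) n / INR n - exp (lam * tlog n) / alpha / INR n) 0.
Proof.
  pose proof C0_pos.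
  assert (Hdefect : Un_cv (fun n => psum m1_defect n / INR n) 0).
  { apply (cesaro_dominated _ xalpha ncross _ (C0 * (1 + alpha) * C0) C0 (C0 / c1) 1);
      [nra | lra | apply xalpha_cv0 | | apply psum_ncross_le].
    intros j. rewrite Rminus_0_r. revert j.
    apply bound_by_crossings; [nra | apply m1_defect_regular_bound | apply m1_defect_bound]. }
  pose proof (CV_plus _ _ _ _ Hdefect (Un_cv_div_INR (exp (lam * tlog O) / alpha))) as Hsum.
  pose proof (CV_opp _ _ Hsum) as Hopp. rewrite Rplus_0_r, Ropp_0 in Hopp.
  refine (Un_cv_ext _ _ _ _ Hopp). intros n. unfold opp_seq.
  assert (Hpsum : psum (fun j => M1 C0 c1 (x (S j))) n
                  = / alpha * (exp (lam * tlog n) - exp (lam * tlog O)) + -1 * psum m1_defect n).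
  { rewrite <- (psum_telescope (fun j => exp (lam * tlog j))), <- psum_lin.
    apply psum_ext. intros j. unfold m1_defect. field. lra. }
  rewrite Hpsum. unfold Rdiv. ring.
Qed.

Lemma psi_tlog_wk_cv :
  Un_cv (fun k => psi lam (tlog (wk (exp lam) k)) / exp (lam * INR k)) (C0 * psi_speed).
Proof.
  pose proof lam_pos as Hlam.
  pose proof (CV_mult _ _ _ _ (Un_cv_subseq _ _ _ psi_tlog_avg_cv (wk_exp_cv_infty lam Hlam))
                (wk_div_exp_cv lam Hlam)) as Hlim.
  rewrite Rmult_1_r in Hlim. refine (Un_cv_ext _ _ _ _ Hlim). intros k.
  pose proof (wk_exp_pos lam Hlam k). pose proof (exp_pos (lam * INR k)). field. lra.
Qed.

Lemma M0_eq_avg n : (1 <= n)%nat ->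
  M0 C0 c1 x n = psum (fun j => M1 C0 c1 (x (S j))) n / INR n.
Proof. intros Hn. unfold M0. rewrite sum_f_R0_pred_psum by exact Hn. unfold Rdiv. ring. Qed.

Lemma M0_wk_cv : exists zeta, Un_cv (fun k => M0 C0 c1 x (wk (exp lam) k)) zeta.
Proof.
  pose proof lam_pos as Hlam. set (w := wk (exp lam)).
  destruct (exp_normalized_cv_of_psi lam Hlam _ _ psi_tlog_wk_cv) as [rho Hrho].
  exists (rho / alpha).
  pose proof (Un_cv_subseq _ w _ M1_avg_sub_exp_cv (wk_exp_cv_infty lam Hlam)) as Havg.
  pose proof (Un_cv_div _ _ _ _ Hrho (wk_div_exp_cv lam Hlam) R1_neq_R0) as Hexp.
  pose proof (CV_plus _ _ _ _ Havg (Un_cv_scal _ _ (/ alpha) Hexp)) as Hlim.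
  replace (0 + / alpha * (rho / 1)) with (rho / alpha) in Hlim by (field; lra).
  refine (Un_cv_ext _ _ _ _ Hlim). intros k.
  pose proof (wk_exp_pos lam Hlam k). pose proof (exp_pos (lam * INR k)).
  assert (Hw : (0 < w k)%nat) by (apply INR_lt; exact (wk_exp_pos lam Hlam k)).
  rewrite M0_eq_avg by exact Hw. unfold w in *. field. repeat split; lra.
Qed.

End Orbit.

Theorem proposition4p3 (alpha c1 C0 : R) (x : nat -> R)
  (Halpha : 0 < alpha < 1) (Hc1 : 0 < c1)
  (HC0 : left_lim (fM alpha C0 c1) (1/2) 1)
  (Hx : is_orbit_seq alpha C0 c1 x) :
  let c := exp (alpha * c1) in
  Un_cv (fun k => INR (wk c (S k)) / INR (wk c k)) c /\
  exists zeta : R, Un_cv (fun k => M0 C0 c1 x (wk c k)) zeta.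
Proof.
  intros c. split.
  - apply wk_succ_ratio_cv. nra.
  - exact (M0_wk_cv alpha c1 C0 x (proj1 Halpha) Hc1 HC0 Hx).
Qed.
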